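(* For the Adaptive-Threshold Dealer, let $\tau$ be a stage and $b$ a possible value of $\mathbf B^\tau$. Conditioned on $\mathbf B^\tau=b$, at every turn $t$ of stage $\tau+1$ (within the Adaptive phase), the number of mini-decks $i$ with $1\le x_{i,t}\le 4\ln(b)/\epsilon$ is at least $$\frac{\epsilon}{8}\cdot\frac{d}{\ln b}.$$
   Context: Adaptive-Threshold Dealer with $d$ mini-decks on $n$ cards ($d\mid n$): the deck is split into $d$ mini-decks, each a fixed ordered stack of $n/d$ cards. Let $L_{i,t}$ be the number of cards drawn from mini-deck $i$ before turn $t$. Adaptive phase (turns $t=1,\dots,n-2d$): repeatedly sample $i\in[d]$ uniformly until $L_{i,t}<\lceil t/d\rceil+1$, then draw the top card of mini-deck $i$. Holes at turn $t$: $x_{i,t}=\lceil t/d\rceil+1-L_{i,t}$. Stage $\tau\ge1$ consists of turns $(\tau-1)d+1,\dots,\tau d$. $\mathbf X_i^\tau=\tau+2-\mathbf L_i^\tau$, where $\mathbf L_i^\tau$ is the number of cards drawn from mini-deck $i$ in turns $1,\dots,\tau d$; $\mathbf X^0=(2,\dots,2)$. With $\epsilon=1/200$, $\Phi(x)=\sum_{i=1}^d(1+\epsilon)^{x_i}$ and $\mathbf B^\tau=\max\{\Phi(\mathbf X^\tau)/d,\ 16/\epsilon^2\}$. *)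

From HB Require Import structures.
From mathcomp Require Import all_boot all_order all_algebra.
From mathcomp Require Import reals exp.
Set Implicit Arguments. Unset Strict Implicit. Unset Printing Implicit Defensive.
Import Order.TTheory GRing.Theory Num.Theory.

(* A run of the Adaptive-Threshold Dealer is described by the sequence
   [s : nat -> 'I_d] of mini-decks drawn from: [s t] is the mini-deck whose
   top card is drawn at turn [t] (turns are numbered from 1; [s 0] is unused). *)

(* ceil (t / d), for d > 0 *)
Definition ceil_div (t d : nat) : nat := (t + d.-1) %/ d.

Definition Lcnt (d : nat) (s : nat -> 'I_d) (i : 'I_d) (t : nat) : nat :=
  \sum_(1 <= u < t) (s u == i : nat).

(* The threshold rule: at turn u the chosen mini-deck i satisfies
   L_{i,u} < ceil(u/d) + 1.  A run has positive probability up to turn T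
   iff every draw at turns 1..T obeys this rule. *)
Definition valid_run (d : nat) (s : nat -> 'I_d) (T : nat) : Prop :=
  forall u, (1 <= u <= T)%N -> (Lcnt s (s u) u < ceil_div u d + 1)%N.

Definition holes (d : nat) (s : nat -> 'I_d) (i : 'I_d) (t : nat) : int :=
  (ceil_div t d + 1)%:Z - (Lcnt s i t)%:Z.

(* X_i^tau = tau + 2 - L_i^tau, L_i^tau = draws from i in turns 1..tau*d. *)
Definition Xst (d : nat) (s : nat -> 'I_d) (tau : nat) (i : 'I_d) : int :=
  (tau + 2)%:Z - (Lcnt s i (tau * d + 1))%:Z.

Local Open Scope ring_scope.

Definition eps {R : realType} : R := 1 / 200.

Definition Phi {R : realType} (d : nat) (x : 'I_d -> int) : R :=
  \sum_(i < d) (1 + eps) ^ (x i).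

Definition Bst {R : realType} (d : nat) (s : nat -> 'I_d) (tau : nat) : R :=
  Num.max (Phi (Xst s tau) / d%:R) (16 / eps ^+ 2).

(* During stage tau+1 every L_{i,t} is at most tau+2, so the holes x_{i,t} are
   nonnegative and sum to d(tau+2) - (t-1) >= d+1; moreover x_{i,t} <= X_i^tau.
   A hole count x > K := 4 ln b / eps forces (1+eps)^{X_i^tau} >= 2 b X_i^tau
   >= 2 b x, so the mini-decks with more than K holes carry in total at most
   Phi(X^tau) / (2b) <= d/2 holes.  The remaining at least d/2 holes lie in
   mini-decks with between 1 and K holes, hence there are at least d / (2K)
   such mini-decks. *)
From HB Require Import structures.
From mathcomp Require Import all_boot all_order all_algebra.
From mathcomp Require Import reals sequences exp.
From mathcomp Require Import ring lra zify.
Set Implicit Arguments. Unset Strict Implicit. Unset Printing Implicit Defensive.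
Import Order.TTheory GRing.Theory Num.Theory.

Lemma leq_ceil_div d u v : (u <= v)%N -> (ceil_div u d <= ceil_div v d)%N.
Proof. by move=> le_uv; apply: leq_div2r; rewrite leq_add2r. Qed.

Lemma ceil_div_stage d tau t : (0 < d)%N ->
  (tau * d < t <= tau.+1 * d)%N -> ceil_div t d = tau.+1.
Proof.
move=> d_gt0 /andP [lo hi]; rewrite /ceil_div; apply/eqP.
by rewrite eqn_leq -ltnS ltn_divLR // leq_divRL //; apply/andP; split; lia.
Qed.

Section DrawCounts.

Variables (d : nat) (s : nat -> 'I_d).

Lemma Lcnt_recr i u : (0 < u)%N -> Lcnt s i u.+1 = (Lcnt s i u + (s u == i))%N.
Proof. by move=> u_gt0; rewrite /Lcnt big_nat_recr. Qed.

Lemma Lcnt_monotone i : {homo Lcnt s i : u v / (u <= v)%N}.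
Proof.
move=> u v /subnK <-; elim: (v - u)%N => [|k IHk] //=; rewrite addSn.
apply: leq_trans IHk _; case: (k + u)%N => [|w]; first by rewrite /Lcnt !big_geq.
by rewrite [in X in (_ <= X)%N]Lcnt_recr // leq_addr.
Qed.

Lemma sum_Lcnt t : (\sum_(i < d) Lcnt s i t = t.-1)%N.
Proof.
rewrite /Lcnt exchange_big /= (eq_bigr (fun _ => 1%N)); last first.
  move=> u _; rewrite (bigD1 (s u)) //= eqxx big1 // => j /negPf.
  by rewrite eq_sym => ->.
by rewrite sum_nat_const_nat muln1 subn1.
Qed.

Lemma valid_run_Lcnt_le T i u : valid_run s T -> (1 <= u <= T.+1)%N ->
  (Lcnt s i u <= ceil_div u.-1 d + 1)%N.
Proof.
move=> valid; elim: u => [|[|u] IHu] //; first by rewrite /Lcnt big_geq.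
rewrite ltnS => /andP [_ le_uT].
rewrite Lcnt_recr //; case: (s u.+1 =P i) => [<-|_]; first by move: (valid u.+1 le_uT) => /=; lia.
rewrite addn0; apply: leq_trans (IHu _) _; first by apply/andP; split => //; lia.
by rewrite leq_add2r leq_ceil_div.
Qed.

Variables (tau t : nat).
Hypotheses (d_gt0 : (0 < d)%N) (t_stage : (tau * d < t <= tau.+1 * d)%N)
  (valid : valid_run s t.-1).

Lemma Lcnt_stage_le i : (Lcnt s i t <= tau.+2)%N.
Proof.
have t_gt0 : (0 < t)%N by case/andP: t_stage; lia.
have := @valid_run_Lcnt_le t.-1 i t valid; rewrite prednK // t_gt0 leqnn => /(_ isT).
have := ceil_div_stage d_gt0 t_stage.
have := @leq_ceil_div d t.-1 t (leq_pred t); lia.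
Qed.

Lemma holes_stage i : holes s i t = (tau.+2 - Lcnt s i t)%N.
Proof.
by rewrite /holes (ceil_div_stage d_gt0 t_stage) addn1 subzn ?Lcnt_stage_le.
Qed.

Lemma Xst_stage i : Xst s tau i = (tau.+2 - Lcnt s i (tau * d + 1))%N.
Proof.
rewrite /Xst subzn ?addn2 //; apply: leq_trans (Lcnt_stage_le i).
by apply: Lcnt_monotone; case/andP: t_stage; lia.
Qed.

Lemma holes_le_Xst i :
  (tau.+2 - Lcnt s i t <= tau.+2 - Lcnt s i (tau * d + 1))%N.
Proof. by apply/leq_sub2l/Lcnt_monotone; case/andP: t_stage; lia. Qed.

Lemma sum_holes_stage : (d.+1 <= \sum_(i < d) (tau.+2 - Lcnt s i t))%N.
Proof.
have split_sum : (\sum_(i < d) (tau.+2 - Lcnt s i t) + t.-1 = tau.+2 * d)%N.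
  rewrite -sum_Lcnt -big_split /= (eq_bigr (fun=> tau.+2)) => [|i _].
    by rewrite sum_nat_const card_ord mulnC.
  by rewrite subnK ?Lcnt_stage_le.
move: split_sum t_stage; lia.
Qed.

End DrawCounts.

Local Open Scope ring_scope.

Lemma ln_1Deps_ge {R : realType} : 1 / 201 <= ln (1 + eps : R).
Proof.
have := @le_ln1Dx R (- (1 / 201)).
have -> : 1 + - (1 / 201) = (1 + eps : R)^-1 by rewrite /eps; field.
by rewrite lnV ?posrE /eps; lra.
Qed.

(* With z := m ln(1+eps) >= 3 ln b and m <= 201 z, the bound follows from
   (1+eps)^m = b^2 exp(z - 2 ln b) >= b^2 (z - 2 ln b + 1) >= b^2 z / 3. *)
Lemma expr_1Deps_ge {R : realType} (b : R) (m : nat) : 1206 <= b ->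
  4 * ln b / eps < m%:R -> 2 * b * m%:R <= (1 + eps) ^+ m.
Proof.
move=> b_ge m_gt; have lnb_gt0 : 0 < ln b by apply: ln_gt0; lra.
have m_ge0 : 0 <= m%:R :> R by [].
have := @ln_1Deps_ge R; set a := ln (1 + eps) => a_ge.
have -> : (1 + eps) ^+ m = expR (m%:R * a).
  by rewrite expRM_natl lnK // posrE /eps; lra.
have := ler_wpM2l m_ge0 a_ge; set z := m%:R * a => m_le.
have z_ge : 3 * ln b <= z.
  by move: m_gt; rewrite (_ : 4 * ln b / eps = 800 * ln b); [lra | rewrite /eps; field].
have -> : expR z = b ^+ 2 * expR (z - 2 * ln b).
  by rewrite -[in LHS](subrK (2 * ln b) z) expRD mulrC (expRM_natl 2) lnK // posrE; lra.
have exp_ge : z / 3 <= expR (z - 2 * ln b) by have := expR_ge1Dx (z - 2 * ln b); lra.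
have : b ^+ 2 * (z / 3) <= b ^+ 2 * expR (z - 2 * ln b).
  by apply: ler_wpM2l; rewrite ?sqr_ge0.
have : 0 <= b * z * (b - 1206) by rewrite !mulr_ge0 //; lra.
rewrite expr2; nra.
Qed.

(* The nonzero entries of [x] are split at [K]; the large ones are paid for
   by the weights [w]. *)
Lemma sum_le_card_small {R : realFieldType} (I : finType) (x : I -> nat)
    (w : I -> R) (K c : R) :
  0 < c -> (forall i, 0 <= w i) ->
  (forall i, K < (x i)%:R -> c * (x i)%:R <= w i) ->
  \sum_i (x i)%:R <=
    #|[set i | (0 < x i)%N && ((x i)%:R <= K)]|%:R * K + (\sum_i w i) / c.
Proof.
move=> c_gt0 w_ge0 large_le; set S := [set i | _].
have w_c_ge0 i : 0 <= w i / c by rewrite divr_ge0 ?w_ge0 ?ltW.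
rewrite (bigID (mem S)) /=; apply: lerD.
  by rewrite mulr_natl -sumr_const; apply: ler_sum => i; rewrite inE => /andP [].
rewrite mulr_suml (bigID (mem S) _ (fun i => w i / c)) /=.
rewrite -[X in X <= _]add0r; apply: lerD; first exact: sumr_ge0.
apply: ler_sum => i; rewrite inE negb_and -leqNgt leqn0 -ltNge.
case/orP => [/eqP -> //|/large_le]; by rewrite ler_pdivlMr // mulrC.
Qed.

Lemma card_small_ge {R : realFieldType} (I : finType) (x : I -> nat)
    (w : I -> R) (K b : R) :
  0 < K -> 0 < b -> (forall i, 0 <= w i) ->
  (#|I|.+1 <= \sum_i x i)%N -> \sum_i w i <= b * #|I|%:R ->
  (forall i, K < (x i)%:R -> 2 * b * (x i)%:R <= w i) ->
  #|I|%:R / 2 / K <= #|[set i | (0 < x i)%N && ((x i)%:R <= K)]|%:R.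
Proof.
move=> K_gt0 b_gt0 w_ge0 sum_x_ge sum_w_le large_le.
have two_b_gt0 : 0 < 2 * b by rewrite mulr_gt0.
have card_le := sum_le_card_small two_b_gt0 w_ge0 large_le.
have sum_x : #|I|%:R + 1 <= \sum_i (x i)%:R :> R by rewrite -natr_sum natr1 ler_nat.
have sum_w : (\sum_i w i) / (2 * b) <= #|I|%:R / 2.
  by rewrite ler_pdivrMr // (_ : _ / 2 * _ = b * #|I|%:R) //; field.
by rewrite ler_pdivrMr //; lra.
Qed.

Lemma Bst_ge {R : realType} d (s : nat -> 'I_d) tau : 16 / eps ^+ 2 <= Bst (R:=R) s tau.
Proof. by rewrite /Bst le_max lexx orbT. Qed.

Lemma Phi_le_Bst {R : realType} d (s : nat -> 'I_d) tau :
  Phi (Xst s tau) / d%:R <= Bst (R:=R) s tau.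
Proof. by rewrite /Bst le_max lexx. Qed.

Theorem claim3p10 (R : realType) (n d : nat) (hd : (0 < d)%N) (hdn : (d %| n)%N)
  (s : nat -> 'I_d) (tau : nat) (b : R) (t : nat) :
  (1 <= tau)%N ->
  (tau * d + 1 <= t <= (tau + 1) * d)%N ->
  (1 <= t <= n - 2 * d)%N ->
  valid_run s t.-1 ->
  Bst s tau = b ->
  (eps / 8) * (d%:R / ln b) <=
    (#|[set i : 'I_d | (1 <= holes s i t)%R &&
                       ((holes s i t)%:~R <= 4 * ln b / eps :> R)]|)%:R.
Proof.
move=> _ t_range _ valid def_b.
have t_stage : (tau * d < t <= tau.+1 * d)%N by move: t_range; rewrite !addn1.
have b_ge : 1206 <= b by rewrite -def_b; apply: le_trans (Bst_ge _ _); rewrite /eps; lra.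
have lnb_gt0 : 0 < ln b by apply: ln_gt0; lra.
set K := 4 * ln b / eps.
set x := fun i => (tau.+2 - Lcnt s i t)%N.
set X := fun i => (tau.+2 - Lcnt s i (tau * d + 1))%N.
have Phi_le : \sum_i (1 + eps) ^+ X i <= b * #|'I_d|%:R.
  rewrite card_ord -ler_pdivrMr ?ltr0n // -def_b; apply: le_trans (Phi_le_Bst _ _).
  by rewrite /Phi (eq_bigr _ (fun i _ => congr1 _ (Xst_stage hd t_stage valid i))).
have large_le i : K < (x i)%:R -> 2 * b * (x i)%:R <= (1 + eps) ^+ X i.
  have x_le : (x i)%:R <= (X i)%:R :> R by rewrite ler_nat (holes_le_Xst _ _ t_stage).
  move=> x_gt; apply: le_trans (expr_1Deps_ge b_ge (lt_le_trans x_gt x_le)).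
  by apply: ler_wpM2l => //; lra.
have K_gt0 : 0 < K by rewrite /K /eps; lra.
have w_ge0 i : 0 <= (1 + eps) ^+ X i :> R by rewrite exprn_ge0 // /eps; lra.
have sum_x_ge : (#|'I_d|.+1 <= \sum_i x i)%N by rewrite card_ord sum_holes_stage.
have -> : eps / 8 * (d%:R / ln b) = d%:R / 2 / K.
  by rewrite /K /eps; field; rewrite gt_eqF.
have -> : [set i | (1 <= holes s i t)%R && ((holes s i t)%:~R <= K)] =
          [set i | (0 < x i)%N && ((x i)%:R <= K)].
  by apply/setP => i; rewrite !inE (holes_stage hd t_stage valid).
rewrite -[d in d%:R / 2]card_ord.
by apply: card_small_ge K_gt0 _ w_ge0 sum_x_ge Phi_le large_le; lra.
Qed.
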